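(* Let $C$ be a cycle of even length. Then $S(C)$ is planar.
   Context: For a graph $G$, the great shadow $S(G)$ is the graph obtained from $G$ by adding, for each vertex $v$ of $G$, a new vertex $v'$ (the shadow vertex of $v$) and making $v'$ adjacent to $v$ and to every neighbor of $v$ in $G$; no other edges are added. *)

From HB Require Import structures.
From mathcomp Require Import all_boot all_order all_algebra.
From mathcomp Require Import boolp classical_sets reals topology normedtype.
From mathcomp Require Import Rstruct Rstruct_topology.
From Stdlib Require Rdefinitions.

Set Implicit Arguments.
Unset Strict Implicit.
Unset Printing Implicit Defensive.

Import Order.TTheory GRing.Theory Num.Theory.

Definition simple_graph (V : finType) (adj : rel V) : Prop :=
  symmetric adj /\ irreflexive adj.

Definition cycle_adj (n : nat) : rel 'I_n :=
  fun i j => (i != j) && ((j == (i.+1 %% n) :> nat) || (i == (j.+1 %% n) :> nat)).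

Definition is_cycle_of_length (V : finType) (adj : rel V) (n : nat) : Prop :=
  (3 <= n)%N /\
  exists f : 'I_n -> V, bijective f /\ forall i j, adj (f i) (f j) = cycle_adj i j.

(* The great shadow S(G): vertices are inl v (original) and inr v (shadow v');
   v' is adjacent to v and to every neighbour of v in G; no other new edges. *)
Definition great_shadow (V : finType) (adj : rel V) : rel (V + V) :=
  fun x y =>
    match x, y with
    | inl u, inl v => adj u v
    | inl u, inr v => (u == v) || adj v u
    | inr u, inl v => (u == v) || adj u v
    | inr _, inr _ => false
    end.

Definition plane := (Rdefinitions.R * Rdefinitions.R)%type.

Local Open Scope ring_scope.

Definition planar (V : finType) (adj : rel V) : Prop :=
  exists (pos : V -> plane) (arc : V -> V -> Rdefinitions.R -> plane),
    injective pos /\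
    forall u v, adj u v ->
      [/\ {within `[0, 1], continuous (arc u v)}%classic,
          (forall s t : Rdefinitions.R, 0 <= s <= 1 -> 0 <= t <= 1 ->
              arc u v s = arc u v t -> s = t),
          arc u v 0 = pos u /\ arc u v 1 = pos v,
          (forall (t : Rdefinitions.R) w, 0 < t < 1 -> arc u v t <> pos w) &
          (forall x y, adj x y -> [set u; v] != [set x; y] ->
             forall s t : Rdefinitions.R, 0 < s < 1 -> 0 < t < 1 ->
               arc u v s <> arc x y t)].

(* Put vertex i of C_n at distance 2 from the origin on the ray of angle
   2 pi i / n, and its shadow on the same ray at distance 1 if i is even and 3
   if i is odd.  Through the winding map (X, r) |-> polar r (2 pi X / n), the
   vertices become lattice points of the cylinder (R / nZ) x R and every edge a
   segment between lattice points at distance at most 1 in each coordinate.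
   The interior of such a segment lies in a single open cell of the lattice (an
   open unit square or an open unit edge), which contains no lattice point, so
   the drawing is planar as soon as distinct edges lie in distinct cells.
   Spokes v v' and cycle edges are alone in their cells; between the rays of
   i and i + 1 the edges i' (i + 1) and i (i + 1)' lie in the squares on
   opposite sides of radius 2, because exactly one of i, i + 1 is even.  For
   the pair n - 1, 0 this is where n even is needed. *)

From mathcomp Require Import all_boot all_order all_algebra.
From mathcomp Require Import boolp set_interval reals topology normedtype trigo.
From mathcomp Require Import Rstruct Rstruct_topology.
From mathcomp Require Import ring lra zify.

Set Implicit Arguments.
Unset Strict Implicit.
Unset Printing Implicit Defensive.

Import Order.TTheory GRing.Theory Num.Theory.
Local Open Scope ring_scope.
Local Notation R := Rdefinitions.R.

Lemma periodicz (U V : zmodType) (f : U -> V) (T : U) :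
  periodic f T -> forall (k : int) a, f (a + T *~ k) = f a.
Proof.
move=> fT [m|m] a; first exact: periodicn.
by rewrite NegzE mulrNz -[in RHS](subrK (T *+ m.+1) a) periodicn.
Qed.

Lemma cos_eq1 (T : realType) (x : T) : cos x = 1 -> exists k : int, x = (pi *+ 2) *~ k.
Proof.
move=> cx1; have pi_gt0 : 0 < pi :> T := @pi_gt0 T.
have T_gt0 : 0 < pi *+ 2 :> T by rewrite mulrn_wgt0.
pose k := Num.floor (x / (pi *+ 2)); exists k.
have kx : k%:~R * (pi *+ 2) <= x by rewrite -ler_pdivlMr //; exact: floor_le.
have xk : x < k%:~R * (pi *+ 2) + pi *+ 2.
  rewrite -[X in _ + X]mul1r -mulrDl -ltr_pdivrMr //.
  by have := floorD1_gt (x / (pi *+ 2)); rewrite intrD.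
pose e := x - (pi *+ 2) *~ k.
have ce1 : cos e = 1 by rewrite /e -mulrNz periodicz // ; exact: cosD2pi.
suff e0 : e = 0 by apply/eqP; rewrite -subr_eq0 -/e e0.
have e_ge0 : 0 <= e by rewrite /e -mulrzl subr_ge0.
have e_lt : e < pi *+ 2 by rewrite /e -mulrzl ltrBlDl.
have cos_inj0 (y : T) : 0 <= y <= pi -> cos y = 1 -> y = 0.
  move=> y0pi cy; apply: cos_inj; rewrite ?cos0 ?in_itv //=.
  by rewrite lexx ltW.
have [epi|pie] := lerP e pi; first by apply: cos_inj0; rewrite ?e_ge0.
suff : pi *+ 2 - e = 0 by rewrite mulr2n in e_lt *; lra.
apply: cos_inj0; last by rewrite addrC cosD2pi cosN.
by rewrite mulr2n in e_lt *; apply/andP; split; lra.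
Qed.

Definition polar (r a : R) : plane := (r * cos a, r * sin a).

Lemma polar_periodic r a (k : int) : polar r (a + (pi *+ 2) *~ k) = polar r a.
Proof. by rewrite /polar !periodicz //; [exact: sinD2pi | exact: cosD2pi]. Qed.

Lemma polar_inj r1 r2 a1 a2 : 0 < r1 -> 0 < r2 -> polar r1 a1 = polar r2 a2 ->
  r1 = r2 /\ exists k : int, a1 = a2 + (pi *+ 2) *~ k.
Proof.
move=> r1_gt0 r2_gt0 [ec es].
have norm_polar (r a : R) : (r * cos a) ^+ 2 + (r * sin a) ^+ 2 = r ^+ 2.
  by rewrite !exprMn -mulrDr cos2Dsin2 mulr1.
have r12 : r1 = r2.
  by apply/eqP; rewrite -(eqrXn2 (_ : 0 < 2)%N) ?ltW // -(norm_polar r1 a1) ec es norm_polar.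
subst r2; split=> //.
have r1_neq0 : r1 != 0 by rewrite gt_eqF.
have [k ek] : exists k : int, a1 - a2 = (pi *+ 2) *~ k.
  apply: cos_eq1; rewrite cosB (mulfI r1_neq0 ec) (mulfI r1_neq0 es).
  by rewrite -!expr2 cos2Dsin2.
by exists k; rewrite -ek addrC subrK.
Qed.

Lemma continuous_polar (r a : R -> R) : continuous r -> continuous a ->
  continuous (fun t => polar (r t) (a t)).
Proof.
move=> cr ca t.
apply: (@cvg_pair _ _ _ _ (nbhs (r t * cos (a t))) (nbhs (r t * sin (a t)))).
- exact: cvgM (cr t) (continuous_comp (ca t) (@continuous_cos R _)).
- exact: cvgM (cr t) (continuous_comp (ca t) (@continuous_sin R _)).
Qed.

Lemma continuous_line_path (a b : R) : continuous (line_path a b).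
Proof.
have -> : line_path a b = fun t => t * (b - a) + a by apply/funext => t; rewrite line_pathEl.
move=> t; exact: (@cvgD R R^o R (nbhs t) _ _ _ _ _
  (cvgM (@cvg_id _ (nbhs t)) (cvg_cst (b - a))) (cvg_cst a)).
Qed.

Section IntegerSegments.
Variable F : archiRealFieldType.

Lemma line_path_gt0 (a b t : F) : 0 < a -> 0 < b -> 0 <= t <= 1 -> 0 < line_path a b t.
Proof. by rewrite /line_path => a0 b0 /andP[t0 t1]; nra. Qed.

Lemma floor_unit_open (m : int) (x : F) :
  m%:~R < x < (m + 1)%:~R -> Num.floor x = m /\ x \isn't a Num.int.
Proof.
move=> /andP[mx xm]; have fx : Num.floor x = m by apply: floor_def; rewrite ltW.
by rewrite intrEfloor fx lt_eqF.
Qed.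

Lemma floor_line_path (a b : int) (t : F) : 0 < t < 1 -> `|b - a| <= 1 ->
  Num.floor (line_path a%:~R b%:~R t) = Num.min a b /\
  (line_path a%:~R b%:~R t \is a Num.int) = (a == b).
Proof.
move=> /andP[t0 t1]; rewrite ler_norml => ab.
have [->|[->|->]] : b = a \/ b = a + 1 \/ b = a - 1 by lia.
- by rewrite line_path_flat /= intrKfloor intr_int minxx eqxx.
- have [-> /negbTE ->] : Num.floor (line_path a%:~R (a + 1)%:~R t) = a /\
      line_path a%:~R (a + 1)%:~R t \isn't a Num.int.
    by apply: floor_unit_open; rewrite line_pathEl rmorphD rmorph1; apply/andP; split; lra.
  by split; lia.
- have [-> /negbTE ->] : Num.floor (line_path a%:~R (a - 1)%:~R t) = a - 1 /\
      line_path a%:~R (a - 1)%:~R t \isn't a Num.int.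
    by apply: floor_unit_open; rewrite line_pathEl subrK rmorphB rmorph1; apply/andP; split; lra.
  by split; lia.
Qed.

Lemma line_path_dist_le1 (a b : int) (s t : F) : `|b - a| <= 1 ->
  0 <= s <= 1 -> 0 <= t <= 1 ->
  `|line_path a%:~R b%:~R s - line_path a%:~R b%:~R t| <= 1.
Proof.
move=> ab /andP[s0 s1] /andP[t0 t1].
have -> : line_path a%:~R b%:~R s - line_path a%:~R b%:~R t = (s - t) * (b - a)%:~R.
  by rewrite !line_pathEl intrB; ring.
rewrite normrM mulr_ile1 //; first by rewrite ler_norml; apply/andP; split; lra.
by rewrite -intr_norm -[1 : F]/((1 : int)%:~R) ler_int.
Qed.

End IntegerSegments.

Section Winding.
Variable n : nat.
Hypothesis n_gt0 : (0 < n)%N.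

Let n_neq0 : n%:R != 0 :> R. Proof. by rewrite pnatr_eq0 -lt0n. Qed.

Definition wind (X r : R) : plane := polar r (X * (pi *+ 2 / n%:R)).

Lemma wind_periodic (k : int) X r : wind (X + k%:~R * n%:R) r = wind X r.
Proof.
rewrite /wind mulrDl -[in RHS](polar_periodic _ _ k) -mulrzl.
by congr (polar _ (_ + _)); field.
Qed.

Lemma wind_inj X1 X2 r1 r2 : 0 < r1 -> 0 < r2 -> wind X1 r1 = wind X2 r2 ->
  r1 = r2 /\ exists k : int, X1 = X2 + k%:~R * n%:R.
Proof.
move=> r1_gt0 r2_gt0 /(polar_inj r1_gt0 r2_gt0) [-> [k ek]]; split=> //; exists k.
have c_neq0 : pi *+ 2 / n%:R != 0 :> R.
  by rewrite mulf_neq0 ?invr_eq0 // mulrn_eq0 /= gt_eqF // pi_gt0.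
by apply: (mulIf c_neq0); rewrite ek -mulrzl; field.
Qed.

Lemma continuous_wind (X r : R -> R) : continuous X -> continuous r ->
  continuous (fun t => wind (X t) (r t)).
Proof.
move=> cX cr; apply: continuous_polar => // t.
exact: cvgM (cX t) (cvg_cst _).
Qed.

Lemma wind_inj_close X1 X2 r1 r2 : 0 < r1 -> 0 < r2 -> `|X1 - X2| < n%:R ->
  wind X1 r1 = wind X2 r2 -> X1 = X2 /\ r1 = r2.
Proof.
move=> r1_gt0 r2_gt0 X12 /(wind_inj r1_gt0 r2_gt0) [-> [k ek]]; split=> //.
suff k0 : k = 0 by rewrite ek k0 mul0r addr0.
have kn : k%:~R * n%:R = X1 - X2 by rewrite ek addrC addKr.
have : `|k * n%:Z| < n%:Z.
  by rewrite -(ltr_int R) intr_norm intrM -[(n : int)%:~R]/(n%:R : R) kn.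
rewrite ltr_norml => /andP[kn_gt kn_lt].
have : k = 0 \/ 1 <= k \/ k <= -1 by lia.
by case=> [|[]] ?; nia.
Qed.

(* The floors of X and r and whether they are integers determine the open cell
   of the lattice Z^2 containing (X, r); X is read modulo n. *)
Definition grid_cell (X r : R) : int * bool * int * bool :=
  ((Num.floor X %% n)%Z, X \is a Num.int, Num.floor r, r \is a Num.int).

Lemma grid_cell_periodic (k : int) X r : grid_cell (X + k%:~R * n%:R) r = grid_cell X r.
Proof.
have kn_int : k%:~R * n%:R \is a @Num.int R by rewrite rpredM ?intr_int ?natr_int.
rewrite /grid_cell floorDrz // rpredDr // -[n%:R]/((n : int)%:~R) -intrM intrKfloor.
by rewrite addrC modzMDl.
Qed.

Lemma wind_grid_cell X1 X2 r1 r2 : 0 < r1 -> 0 < r2 -> wind X1 r1 = wind X2 r2 ->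
  grid_cell X1 r1 = grid_cell X2 r2.
Proof. by move=> r1_gt0 r2_gt0 /wind_inj [//|//|-> [k ->]]; rewrite grid_cell_periodic. Qed.

Lemma grid_cell_int (c r : int) : grid_cell c%:~R r%:~R = ((c %% n)%Z, true, r, true).
Proof. by rewrite /grid_cell !intrKfloor !intr_int. Qed.

Definition segment_cell (c1 c2 r1 r2 : int) : int * bool * int * bool :=
  ((Num.min c1 c2 %% n)%Z, c1 == c2, Num.min r1 r2, r1 == r2).

Lemma grid_cell_segment (c1 c2 r1 r2 : int) t : 0 < t < 1 ->
  `|c2 - c1| <= 1 -> `|r2 - r1| <= 1 ->
  grid_cell (line_path c1%:~R c2%:~R t) (line_path r1%:~R r2%:~R t) =
  segment_cell c1 c2 r1 r2.
Proof.
move=> t01 /(floor_line_path t01) [fc ic] /(floor_line_path t01) [fr ir].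
by rewrite /grid_cell fc ic fr ir.
Qed.

End Winding.

Section GridDrawing.
Variables (n : nat) (V : finType) (adj : rel V).
Variables (col row : V -> int) (step : V -> V -> int).
Hypotheses (n_gt1 : (1 < n)%N) (adj_irr : irreflexive adj).
Hypothesis row_gt0 : forall v, 0 < row v.
Hypothesis grid_inj : forall u v, (col u = col v %[mod n])%Z -> row u = row v -> u = v.
Hypothesis step_mod : forall u v, adj u v -> (col u + step u v = col v %[mod n])%Z.
Hypothesis step_le1 : forall u v, adj u v -> `|step u v| <= 1.
Hypothesis row_le1 : forall u v, adj u v -> `|row v - row u| <= 1.

Definition edge_cell u v := segment_cell n (col u) (col u + step u v) (row u) (row v).

Hypothesis edge_cell_inj : forall u v x y, adj u v -> adj x y ->
  edge_cell u v = edge_cell x y -> [set u; v] = [set x; y].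

Let n_gt0 : (0 < n)%N := ltnW n_gt1.

Definition grid_pos v := wind n (col v)%:~R (row v)%:~R.

Definition grid_arc u v t :=
  wind n (line_path (col u)%:~R (col u + step u v)%:~R t)
         (line_path (row u)%:~R (row v)%:~R t).

Lemma edge_ends_neq u v : adj u v -> (col u != col u + step u v) || (row u != row v).
Proof.
move=> uv; rewrite -negb_and; apply/negP => /andP[/eqP ec /eqP er].
have cm : (col u = col v %[mod n])%Z by rewrite {1}ec; exact: step_mod.
by move: uv; rewrite (grid_inj cm er) adj_irr.
Qed.

Lemma lifted_col_le1 u v : adj u v -> `|col u + step u v - col u| <= 1.
Proof. by move=> uv; rewrite [col u + _]addrC addrK step_le1. Qed.

Lemma grid_arc_radius_gt0 u v (t : R) : 0 <= t <= 1 -> 0 < line_path (row u)%:~R (row v)%:~R t.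
Proof. by apply: line_path_gt0; rewrite ltr0z. Qed.

Lemma grid_arc_cell u v (t : R) : adj u v -> 0 < t < 1 ->
  grid_cell n (line_path (col u)%:~R (col u + step u v)%:~R t)
              (line_path (row u)%:~R (row v)%:~R t) = edge_cell u v.
Proof.
by move=> uv t01; rewrite grid_cell_segment ?lifted_col_le1 ?row_le1.
Qed.

Lemma grid_arc_end u v : adj u v -> grid_arc u v 1 = grid_pos v.
Proof.
move=> /step_mod /eqP; rewrite eqz_mod_dvd => /dvdzP [q eq].
rewrite /grid_arc !line_path1 /grid_pos -(subrK (col v) (_ + _)) eq addrC.
by rewrite intrD intrM wind_periodic.
Qed.

Lemma grid_arc_inj u v (s t : R) : adj u v -> 0 <= s <= 1 -> 0 <= t <= 1 ->
  grid_arc u v s = grid_arc u v t -> s = t.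
Proof.
move=> uv s01 t01.
have n_gt1R : 1 < n%:R :> R by rewrite ltr1n.
have close := le_lt_trans (line_path_dist_le1 (lifted_col_le1 uv) s01 t01) n_gt1R.
move=> /(wind_inj_close n_gt0 (grid_arc_radius_gt0 _ _ s01) (grid_arc_radius_gt0 _ _ t01) close).
case: (orP (edge_ends_neq uv)) => neq [eX eR].
  by apply: (line_path_inj _ eX); rewrite eqr_int.
by apply: (line_path_inj _ eR); rewrite eqr_int.
Qed.

Theorem planar_grid_drawing : planar adj.
Proof.
have pos_gt0 v : 0 < (row v)%:~R :> R by rewrite ltr0z.
exists grid_pos, grid_arc; split.
  move=> u v /(wind_grid_cell n_gt0 (pos_gt0 u) (pos_gt0 v)).
  by rewrite !grid_cell_int => -[cm rm]; apply: grid_inj.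
move=> u v uv; have ltW01 (t : R) : 0 < t < 1 -> 0 <= t <= 1.
  by case/andP => ? ?; rewrite !ltW.
split.
- by apply: continuous_subspaceT; apply: continuous_wind; exact: continuous_line_path.
- by move=> s t; exact: grid_arc_inj.
- by rewrite grid_arc_end // /grid_arc !line_path0.
- move=> t w t01 /(wind_grid_cell n_gt0 (grid_arc_radius_gt0 _ _ (ltW01 _ t01)) (pos_gt0 w)).
  rewrite grid_arc_cell // grid_cell_int => -[_ ec _ er].
  by move: (edge_ends_neq uv); rewrite ec er.
- move=> x y xy neq s t s01 t01.
  move=> /(wind_grid_cell n_gt0 (grid_arc_radius_gt0 _ _ (ltW01 _ s01))
                          (grid_arc_radius_gt0 _ _ (ltW01 _ t01))).
  rewrite !grid_arc_cell // => /(edge_cell_inj uv xy) e.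
  by rewrite e eqxx in neq.
Qed.

End GridDrawing.

Lemma planar_inj_hom (V W : finType) (adjV : rel V) (adjW : rel W) (h : V -> W) :
  injective h -> (forall u v, adjV u v -> adjW (h u) (h v)) ->
  planar adjW -> planar adjV.
Proof.
move=> h_inj hom [pos [arc [pos_inj arcP]]].
exists (pos \o h), (fun u v => arc (h u) (h v)); split.
  by move=> u v /pos_inj /h_inj.
move=> u v /hom uv; have [? ? ? avoid disj] := arcP _ _ uv; split=> //.
  by move=> t w; apply: avoid.
move=> x y /hom xy neq; apply: disj xy _.
apply: contra_neq neq => e; apply/setP => z.
by move/setP: e => /(_ (h z)); rewrite !inE !(inj_eq h_inj).
Qed.

Lemma great_shadow_inj_hom (V W : finType) (adjV : rel V) (adjW : rel W) (h : V -> W) :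
  injective h -> (forall u v, adjV u v = adjW (h u) (h v)) ->
  planar (great_shadow adjW) -> planar (great_shadow adjV).
Proof.
move=> h_inj hom; pose hh (x : V + V) := match x with inl v => inl (h v) | inr v => inr (h v) end.
apply: (@planar_inj_hom _ _ _ _ hh).
  by case=> u [] v //= [/h_inj ->].
by case=> u [] v; rewrite /= ?(inj_eq h_inj) ?hom.
Qed.

Lemma cycle_adj_sym n : symmetric (@cycle_adj n).
Proof. by move=> i j; rewrite /cycle_adj eq_sym orbC. Qed.

Section EvenCycleShadow.
Variable n : nat.
Hypotheses (n_gt1 : (1 < n)%N) (n_even : ~~ odd n).

Local Notation shadow := (great_shadow (@cycle_adj n)).

Definition base (x : 'I_n + 'I_n) : 'I_n := match x with inl i | inr i => i end.

Definition is_shadow (x : 'I_n + 'I_n) : bool := if x is inr _ then true else false.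

Definition shadow_col (x : 'I_n + 'I_n) : int := base x.

Definition shadow_row (x : 'I_n + 'I_n) : int :=
  if x is inr i then (if odd i then 3 else 1) else 2.

Definition shadow_step (x y : 'I_n + 'I_n) : int :=
  if base x == base y then 0
  else if (base y == (base x).+1 %% n :> nat)%N then 1 else -1.

Local Notation cell := (edge_cell n shadow_col shadow_row shadow_step).

Lemma shadow_irr : irreflexive shadow.
Proof. by case=> i //=; rewrite /cycle_adj eqxx. Qed.

Lemma shadow_base_adj x y : shadow x y ->
  (base x == base y) || cycle_adj (base x) (base y).
Proof.
by case: x y => i [] j //=; [move->; rewrite orbT | rewrite cycle_adj_sym].
Qed.

Lemma shadow_not_both x y : shadow x y -> ~~ (is_shadow x && is_shadow y).
Proof. by case: x y => i [] j. Qed.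

Lemma shadow_rowE x :
  shadow_row x = if is_shadow x then (if odd (base x) then 3 else 1) else 2.
Proof. by case: x. Qed.

Lemma shadow_vertex_inj x y : base x = base y -> shadow_row x = shadow_row y -> x = y.
Proof.
move=> ei; rewrite !shadow_rowE ei.
by case: x y ei => i [] j //= -> ; case: odd.
Qed.

Lemma shadow_col_mod x : (shadow_col x %% n)%Z = shadow_col x.
Proof. by rewrite modz_small // ltz_nat ltn_ord. Qed.

Lemma shadow_grid_inj x y : (shadow_col x = shadow_col y %[mod n])%Z ->
  shadow_row x = shadow_row y -> x = y.
Proof. by rewrite !shadow_col_mod => -[/val_inj]; exact: shadow_vertex_inj. Qed.

Lemma shadow_step_mod x y : shadow x y ->
  (shadow_col x + shadow_step x y = shadow_col y %[mod n])%Z.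
Proof.
move=> /shadow_base_adj; rewrite /shadow_step /shadow_col.
have [-> _|ne] := eqVneq (base x) (base y); first by rewrite addr0.
rewrite /= /cycle_adj ne /=; case: eqP => [-> _|_ /eqP ->].
  by rewrite -modz_nat modz_mod -addn1 PoszD.
by rewrite -modz_nat modzDml -addn1 PoszD addrK.
Qed.

Lemma shadow_step_le1 x y : `|shadow_step x y| <= 1.
Proof. by rewrite /shadow_step; case: ifP => // _; case: ifP. Qed.

Lemma shadow_row_le1 x y : shadow x y -> `|shadow_row y - shadow_row x| <= 1.
Proof. by case: x y => i [] j //= _; case: odd; case: odd. Qed.

Lemma odd_succ_modn (l : nat) : (l < n)%N -> odd (l.+1 %% n) = ~~ odd l.
Proof.
move=> l_lt; have [lt|eq] : (l.+1 < n \/ l.+1 = n)%N by lia.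
  by rewrite modn_small.
by move: n_even; rewrite -eq modnn /= negbK => ->.
Qed.

Lemma spoke_set x y : shadow x y -> base x = base y ->
  [set x; y] = [set inl (base x); inr (base x)].
Proof.
case: x y => i [] j //= => [+ e|_ ->//|_ ->]; last by apply/setP => z; rewrite !inE orbC.
by rewrite e /cycle_adj eqxx.
Qed.

Lemma spoke_cell x y : base x = base y ->
  cell x y = (shadow_col x, true, Num.min (shadow_row x) (shadow_row y),
              shadow_row x == shadow_row y).
Proof.
move=> e; rewrite /edge_cell /segment_cell /shadow_step e eqxx.
by rewrite addr0 minxx shadow_col_mod eqxx.
Qed.

Lemma sector_cell x y : shadow x y -> base x != base y ->
  exists x0 y0, [/\ [set x; y] = [set x0; y0],
    (base y0 = (base x0).+1 %% n :> nat)%N, ~~ (is_shadow x0 && is_shadow y0) &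
    cell x y = (shadow_col x0, false, Num.min (shadow_row x0) (shadow_row y0),
                shadow_row x0 == shadow_row y0)].
Proof.
move=> xy ne; have xy_mod := shadow_step_mod xy; have not_both := shadow_not_both xy.
move: (shadow_base_adj xy); rewrite (negbTE ne) /= /cycle_adj ne /=.
rewrite /edge_cell /segment_cell; move: xy_mod; rewrite /shadow_step (negbTE ne).
case: eqP => [fwd _ _|_ xy_mod /eqP bwd].
  exists x, y; split=> //.
  have -> : Num.min (shadow_col x) (shadow_col x + 1) = shadow_col x by lia.
  by rewrite shadow_col_mod; have -> : (shadow_col x == shadow_col x + 1) = false by lia.
exists y, x; split=> //; first by apply/setP => z; rewrite !inE orbC.
  by rewrite andbC.
have -> : Num.min (shadow_col x) (shadow_col x + -1) = shadow_col x - 1 by lia.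
rewrite xy_mod shadow_col_mod minC (eq_sym (shadow_row x)).
by have -> : (shadow_col x == shadow_col x - 1) = false by lia.
Qed.

Lemma sector_rows_inj x y x' y' : base x = base x' ->
  (base y = (base x).+1 %% n :> nat)%N -> (base y' = (base x').+1 %% n :> nat)%N ->
  ~~ (is_shadow x && is_shadow y) -> ~~ (is_shadow x' && is_shadow y') ->
  Num.min (shadow_row x) (shadow_row y) = Num.min (shadow_row x') (shadow_row y') ->
  (shadow_row x == shadow_row y) = (shadow_row x' == shadow_row y') ->
  x = x' /\ y = y'.
Proof.
move=> exx' ey ey' nb nb' emin eeq.
have eyy' : base y = base y' by apply: ord_inj; rewrite ey ey' exx'.
have odd_y : odd (base y) = ~~ odd (base x) by rewrite ey odd_succ_modn.
suff [] : shadow_row x = shadow_row x' /\ shadow_row y = shadow_row y'.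
  by move=> /(shadow_vertex_inj exx') -> /(shadow_vertex_inj eyy') ->.
move: nb nb' emin eeq; rewrite !shadow_rowE -exx' -eyy' odd_y.
move: (is_shadow x) (is_shadow y) (is_shadow x') (is_shadow y') (odd (base x)).
by do 5!case.
Qed.

Lemma shadow_cell_inj x y x' y' : shadow x y -> shadow x' y' ->
  cell x y = cell x' y' -> [set x; y] = [set x'; y'].
Proof.
move=> xy xy'.
have [e|ne] := eqVneq (base x) (base y); have [e'|ne'] := eqVneq (base x') (base y').
- rewrite (spoke_cell e) (spoke_cell e') (spoke_set xy e) (spoke_set xy' e').
  by case=> /val_inj ->.
- have [x0 [y0 [_ _ _ ->]]] := sector_cell xy' ne'.
  by rewrite (spoke_cell e).
- have [x0 [y0 [_ _ _ ->]]] := sector_cell xy ne.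
  by rewrite (spoke_cell e').
have [x0 [y0 [-> ey0 not_both ->]]] := sector_cell xy ne.
have [x0' [y0' [-> ey0' not_both' ->]]] := sector_cell xy' ne'.
case=> /val_inj ex0 emin eeq.
by have [-> ->] := sector_rows_inj ex0 ey0 ey0' not_both not_both' emin eeq.
Qed.

Theorem great_shadow_even_cycle_planar : planar shadow.
Proof.
apply: (@planar_grid_drawing n _ _ shadow_col shadow_row shadow_step) => //.
- exact: shadow_irr.
- by case=> i //=; case: odd.
- exact: shadow_grid_inj.
- exact: shadow_step_mod.
- by move=> x y _; exact: shadow_step_le1.
- exact: shadow_row_le1.
- exact: shadow_cell_inj.
Qed.

End EvenCycleShadow.

Theorem lemma6p1 (V : finType) (adj : rel V) (n : nat) :
  simple_graph adj -> is_cycle_of_length adj n -> ~~ odd n ->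
  planar (great_shadow adj).
Proof.
move=> _ [n_ge3 [f [[g _ gK] f_adj]]] n_even.
apply: (@great_shadow_inj_hom _ _ _ _ g (can_inj gK)).
  by move=> u v; rewrite -{1}(gK u) -{1}(gK v) f_adj.
exact: great_shadow_even_cycle_planar (leq_trans _ n_ge3) n_even.
Qed.
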